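(* Let $n$ be a positive multiple of $3$ and $0\le m\le n/3$ an integer. Let $\mathcal{G}(n,m)$ be the $3$-graph defined in the context. Then the number $\varphi(n,m)$ of $4$-subsets of $[n]$ that induce exactly three edges in $\mathcal{G}(n,m)$ (i.e. induced copies of $K_4^{3-}$) equals $$\varphi(n,m)=\frac{1}{6}m^2(n-3m)(n-3m-3).$$
   Context: Let $[n]=V_1\cup V_2\cup V_3$ be a partition with $|V_j|=n/3$, and for $j\in[3]$ let $V_j=V_{1,j}\cup V_{2,j}$ be a partition with $|V_{1,j}|=m$ and $|V_{2,j}|=n/3-m$. Indices $j$ are taken modulo $3$. The $3$-graph $\mathcal{G}(n,m)$ on $[n]$ has as edges all triples $\{a,b,c\}$ of distinct vertices of the following forms: (1) $a,b,c\in V_{i,j}$ for some $i\in[2]$, $j\in[3]$; (2) $a,b\in V_{1,j}$, $c\in V_{2,j}$; (3) $a,b\in V_{1,j}$, $c\in V_{j+1}$; (4) $a,b\in V_{2,j}$, $c\in V_{1,j+1}$; (5) $a,b\in V_{2,j}$, $c\in V_{j-1}$; (6) $a\in V_{1,j}$, $b\in V_{2,j}$, $c\in V_{j+1}$ (for some $j\in[3]$). $K_4^{3-}$ denotes the $3$-graph on four vertices with three edges. *)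

From mathcomp Require Import all_boot all_order all_algebra.
Set Implicit Arguments. Unset Strict Implicit. Unset Printing Implicit Defensive.

(* Concrete labelling of the partition: with k = n/3,
   V_j = { v | v / k = j } for j in {0,1,2} (indices mod 3),
   V_{1,j} = { v in V_j | v mod k < m },  V_{2,j} = V_j \ V_{1,j}. *)
Section G.
Variables n m : nat.

Definition part (v : 'I_n) : nat := v %/ (n %/ 3).
Definition lvl1 (v : 'I_n) : bool := v %% (n %/ 3) < m.

Definition nextp (j : nat) : nat := (j + 1) %% 3.
Definition prevp (j : nat) : nat := (j + 2) %% 3.

(* a, b, c realize one of the patterns (1)-(6) in this order *)
Definition edge_pattern (a b c : 'I_n) : bool :=
  [|| [&& part a == part b, part b == part c,
                    lvl1 a == lvl1 b & lvl1 b == lvl1 c]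
    , [&& lvl1 a, lvl1 b, ~~ lvl1 c,
                    part a == part b & part c == part a]
    , [&& lvl1 a, lvl1 b, part a == part b & part c == nextp (part a)]
    , [&& ~~ lvl1 a, ~~ lvl1 b, lvl1 c,
                    part a == part b & part c == nextp (part a)]
    , [&& ~~ lvl1 a, ~~ lvl1 b, part a == part b
                    & part c == prevp (part a)]
    | [&& lvl1 a, ~~ lvl1 b, part a == part b
                    & part c == nextp (part a)]].

Definition Gedge (T : {set 'I_n}) : bool :=
  [exists a, exists b, exists c,
     [&& T == [set a; b; c], #|T| == 3 & edge_pattern a b c]].

Definition induced_edges (S : {set 'I_n}) : nat :=
  #|[set T : {set 'I_n} | (T \subset S) && Gedge T]|.

Definition phi : nat :=
  #|[set S : {set 'I_n} | (#|S| == 4) && (induced_edges S == 3)]|.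
End G.

From mathcomp Require Import all_boot all_order all_algebra.
From mathcomp Require Import ring zify.
Set Implicit Arguments. Unset Strict Implicit. Unset Printing Implicit Defensive.

(* Whether three vertices of G(n,m) span an edge depends only on their types
   (j, i) with v in V_{i,j}.  A finite check over all type assignments shows
   that a 4-set spans exactly three edges iff it consists of one vertex of
   V_{1,j}, two of V_{2,j} and one of V_{1,j+1} for some j (a "kite").  Kites
   correspond bijectively to such choices, so
   phi(n,m) = 3 * m * C(n/3 - m, 2) * m = m^2 (n - 3m) (n - 3m - 3) / 6. *)

Lemma card_ord_range n lo hi : hi <= n -> #|[set v : 'I_n | lo <= v < hi]| = hi - lo.
Proof.
move=> hi_le_n; rewrite -sum1_card.
have -> : hi - lo = \sum_(lo <= i < hi) 1 by rewrite sum_nat_const_nat muln1.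
have [lo_le_hi|hi_lt_lo] := leqP lo hi; last first.
  by rewrite big_geq ?(ltnW hi_lt_lo) // big_pred0 // => v; rewrite inE; lia.
rewrite (big_nat_widen _ _ _ _ _ hi_le_n) big_geq_mkord.
by apply: eq_bigl => v; rewrite inE; lia.
Qed.

Lemma divn_modn_range k j lo hi v : 0 < k -> hi <= k ->
  (lo <= v %% k < hi) && (v %/ k == j) = (j * k + lo <= v < j * k + hi).
Proof.
move=> k_gt0 hi_le_k; rewrite [in RHS](divn_eq v k) andbC.
have := ltn_pmod v k_gt0.
have [<- _|ne v_lt] := eqVneq (v %/ k) j; first by rewrite leq_add2l ltn_add2l.
apply/esym/negbTE; case: (ltngtP (v %/ k) j) ne => // lt_vj _.
  have : (v %/ k).+1 * k <= j * k by rewrite leq_mul2r lt_vj orbT.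
  lia.
have : j.+1 * k <= v %/ k * k by rewrite leq_mul2r lt_vj orbT.
lia.
Qed.

Lemma cards_depX (I T : finType) (A : I -> {set T}) :
  #|[set x : I * T | x.2 \in A x.1]| = \sum_i #|A i|.
Proof.
rewrite -sum1_card (eq_bigr (fun i => \sum_(t in A i) 1)) => [|i _].
  by rewrite pair_big_dep; apply: eq_bigl => -[i t]; rewrite inE.
by rewrite sum1_card.
Qed.

Lemma setD1_draws (T : finType) (S : {set T}) k : #|S| = k.+1 ->
  [set U : {set T} | U \subset S & #|U| == k] = [set S :\ x | x in S].
Proof.
move=> card_S; apply/setP=> U; rewrite inE; apply/andP/imsetP.
- case=> sUS /eqP card_U.
  have /cards1P[x SDU] : #|S :\: U| == 1 by rewrite cardsDS // card_S card_U subSnn.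
  have /setDP[xS _] : x \in S :\: U by rewrite SDU set11.
  by exists x; rewrite // -SDU setDDr setDv set0U; apply/esym/setIidPr.
- case=> x xS ->; split; first exact: subsetDl.
  by move: (cardsD1 x S); rewrite xS card_S add1n => -[<-].
Qed.

Section FourSets.
Variable T : finType.

Lemma card_set3 (a b c : T) : (#|[set a; b; c]| == 3) = uniq [:: a; b; c].
Proof.
have -> : #|[set a; b; c]| = #|[:: a; b; c]| by apply: eq_card => v; rewrite !inE orbA.
exact/eqP/card_uniqP.
Qed.

Lemma set4_enum (S : {set T}) : #|S| = 4 ->
  exists a b c d, uniq [:: a; b; c; d] /\ S =i [:: a; b; c; d].
Proof.
rewrite cardE; have := enum_uniq S; have S_eq : S =i enum S by move=> v; rewrite mem_enum.
move: (enum S) S_eq => [|a [|b [|c [|d [|]]]]] // S_eq uniq_abcd _.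
by exists a, b, c, d.
Qed.

Lemma card_pred4 (S : {set T}) (P : pred T) a b c d :
  uniq [:: a; b; c; d] -> S =i [:: a; b; c; d] ->
  #|[set x in S | P x]| = P a + P b + P c + P d.
Proof.
move=> uniq_abcd S_eq.
have -> : #|[set x in S | P x]| = #|[seq x <- [:: a; b; c; d] | P x]|.
  by apply: eq_card => v; rewrite inE mem_filter S_eq andbC.
have /card_uniqP -> := filter_uniq P uniq_abcd.
by rewrite size_filter /= !addnA addn0.
Qed.

Lemma setD1_seq4 (S : {set T}) a b c d :
  uniq [:: a; b; c; d] -> S =i [:: a; b; c; d] ->
  [/\ S :\ a =i [:: b; c; d], S :\ b =i [:: a; c; d],
      S :\ c =i [:: a; b; d] & S :\ d =i [:: a; b; c]].
Proof.
rewrite /= !inE !negb_or => /and4P[/and3P[ab ac ad] /andP[bc bd] cd _] S_eq.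
split=> v; rewrite !inE S_eq !inE.
- by case: (eqVneq v a) => [->|] //=; rewrite (negbTE ab) (negbTE ac) (negbTE ad).
- by case: (eqVneq v b) => [->|] //=; rewrite eq_sym (negbTE ab) (negbTE bc) (negbTE bd).
- case: (eqVneq v c) => [->|] //=.
  by rewrite eq_sym (negbTE ac) eq_sym (negbTE bc) (negbTE cd).
- case: (eqVneq v d) => [->|_] /=; last by rewrite !orbF.
  by rewrite eq_sym (negbTE ad) eq_sym (negbTE bd) eq_sym (negbTE cd).
Qed.

End FourSets.

Definition vertex_type := (nat * bool)%type.

Definition type_edge (a b c : vertex_type) : bool :=
  [|| [&& a.1 == b.1, b.1 == c.1, a.2 == b.2 & b.2 == c.2]
    , [&& a.2, b.2, ~~ c.2, a.1 == b.1 & c.1 == a.1]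
    , [&& a.2, b.2, a.1 == b.1 & c.1 == nextp a.1]
    , [&& ~~ a.2, ~~ b.2, c.2, a.1 == b.1 & c.1 == nextp a.1]
    , [&& ~~ a.2, ~~ b.2, a.1 == b.1 & c.1 == prevp a.1]
    | [&& a.2, ~~ b.2, a.1 == b.1 & c.1 == nextp a.1]].

Definition type_triangle (a b c : vertex_type) : bool :=
  [|| type_edge a b c, type_edge a c b, type_edge b a c,
      type_edge b c a, type_edge c a b | type_edge c b a].

Definition type_edges4 (a b c d : vertex_type) : nat :=
  type_triangle b c d + type_triangle a c d + type_triangle a b d + type_triangle a b c.

Definition kite_type (a b c d : vertex_type) : bool :=
  [&& a.2, ~~ b.2, ~~ c.2, d.2, b.1 == a.1, c.1 == a.1 & d.1 == nextp a.1].

(* the 12 orderings of a kite type, up to swapping its two middle entries *)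
Definition kite_type_perm (a b c d : vertex_type) : bool :=
  [|| kite_type a b c d, kite_type a b d c, kite_type a c d b,
      kite_type b a c d, kite_type b a d c, kite_type b c d a,
      kite_type c a b d, kite_type c a d b, kite_type c b d a,
      kite_type d a b c, kite_type d a c b | kite_type d b c a].

Lemma type_edges4_eq3 (a b c d : vertex_type) :
  a.1 < 3 -> b.1 < 3 -> c.1 < 3 -> d.1 < 3 ->
  (type_edges4 a b c d == 3) = kite_type_perm a b c d.
Proof.
by case: a => [[|[|[|?]]] []] //; case: b => [[|[|[|?]]] []] //;
   case: c => [[|[|[|?]]] []] //; case: d => [[|[|[|?]]] []].
Qed.

Section TypedEdges.
Variables n m : nat.

Definition vtype (v : 'I_n) : vertex_type := (part v, lvl1 m v).

Lemma edge_pattern_type (a b c : 'I_n) :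
  edge_pattern m a b c = type_edge (vtype a) (vtype b) (vtype c).
Proof. by []. Qed.

Lemma Gedge_pattern (T : {set 'I_n}) a b c :
  uniq [:: a; b; c] -> T =i [:: a; b; c] -> edge_pattern m a b c -> Gedge m T.
Proof.
move=> uniq_abc T_eq pat; apply/existsP; exists a; apply/existsP; exists b.
apply/existsP; exists c; rewrite pat andbT.
have -> : T = [set a; b; c] by apply/setP => v; rewrite T_eq !inE orbA.
by rewrite eqxx card_set3.
Qed.

Lemma Gedge_set3 (T : {set 'I_n}) a b c : uniq [:: a; b; c] -> T =i [:: a; b; c] ->
  Gedge m T = type_triangle (vtype a) (vtype b) (vtype c).
Proof.
move=> uniq_abc T_eq; apply/idP/idP.
- case/existsP=> x /existsP[y /existsP[z /and3P[/eqP TE card_T pat]]].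
  rewrite edge_pattern_type in pat.
  have uniq_xyz : uniq [:: x; y; z] by rewrite -card_set3 -TE card_T.
  have in_abc v : v \in [set x; y; z] -> [|| v == a, v == b | v == c].
    by rewrite -TE T_eq !inE.
  have /in_abc x_in : x \in [set x; y; z] by rewrite !inE eqxx.
  have /in_abc y_in : y \in [set x; y; z] by rewrite !inE eqxx orbT.
  have /in_abc z_in : z \in [set x; y; z] by rewrite !inE eqxx orbT.
  move: uniq_xyz pat; case/or3P: x_in => /eqP->; case/or3P: y_in => /eqP->;
    case/or3P: z_in => /eqP->; rewrite /= !inE ?eqxx ?orbT ?andbF //= => _ pat;
    by rewrite /type_triangle pat ?orbT.
- have Gedge_perm x y z :
      perm_eq [:: x; y; z] [:: a; b; c] -> edge_pattern m x y z -> Gedge m T.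
    move=> pxyz; apply: Gedge_pattern; first by rewrite (perm_uniq pxyz).
    by move=> v; rewrite T_eq (perm_mem pxyz).
  by case/or4P=> [pat|pat|pat|/or3P[pat|pat|pat]]; apply: (Gedge_perm _ _ _ _ pat);
    apply/permP => p /=; lia.
Qed.

Lemma Gedge_card3 (T : {set 'I_n}) : Gedge m T -> #|T| = 3.
Proof. by case/existsP=> x /existsP[y /existsP[z /and3P[_ /eqP]]]. Qed.

Lemma induced_edges_card4 (S : {set 'I_n}) : #|S| = 4 ->
  induced_edges m S = #|[set x in S | Gedge m (S :\ x)]|.
Proof.
move=> card_S; rewrite /induced_edges.
have -> : [set T : {set 'I_n} | (T \subset S) && Gedge m T] =
          [set S :\ x | x in [set x in S | Gedge m (S :\ x)]].
  apply/setP=> T; rewrite inE; apply/andP/imsetP => [[sTS GT]|[x]].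
  - have : T \in [set U : {set 'I_n} | U \subset S & #|U| == 3].
      by rewrite inE sTS (Gedge_card3 GT).
    by rewrite setD1_draws // => /imsetP[x xS T_eq]; exists x; rewrite // inE xS -T_eq.
  - by rewrite inE => /andP[xS Gx] ->; split; first exact: subsetDl.
have setDD1 x : x \in S -> S :\: (S :\ x) = [set x].
  by move=> xS; rewrite setDDr setDv set0U; apply/setIidPr; rewrite sub1set.
rewrite card_in_imset // => x y; rewrite !inE => /andP[xS _] /andP[yS _] Dxy.
by apply: set1_inj; rewrite -setDD1 // Dxy setDD1.
Qed.

Lemma induced_edges_set4 (S : {set 'I_n}) a b c d :
  uniq [:: a; b; c; d] -> S =i [:: a; b; c; d] ->
  induced_edges m S = type_edges4 (vtype a) (vtype b) (vtype c) (vtype d).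
Proof.
move=> uniq_abcd S_eq; have [Da Db Dc Dd] := setD1_seq4 uniq_abcd S_eq.
have card_S : #|S| = 4 by rewrite (eq_card S_eq); exact/card_uniqP.
rewrite induced_edges_card4 // (card_pred4 _ uniq_abcd S_eq).
move: uniq_abcd; rewrite /= !inE !negb_or => /and4P[/and3P[ab ac ad] /andP[bc bd] cd _].
by rewrite (Gedge_set3 _ Da) ?(Gedge_set3 _ Db) ?(Gedge_set3 _ Dc) ?(Gedge_set3 _ Dd)
           //= !inE !negb_or ?ab ?ac ?ad ?bc ?bd ?cd.
Qed.

End TypedEdges.

Section Kites.
Variables n m : nat.
Hypotheses (n_gt0 : 0 < n) (dvd3n : 3 %| n) (m_le : m <= n %/ 3).
Local Notation k := (n %/ 3).

Definition V1 j : {set 'I_n} := [set v | lvl1 m v & part v == j].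
Definition V2 j : {set 'I_n} := [set v | ~~ lvl1 m v & part v == j].

Definition kite_choice j : {set 'I_n * {set 'I_n} * 'I_n} :=
  setX (setX (V1 j) [set B : {set 'I_n} | B \subset V2 j & #|B| == 2]) (V1 (nextp j)).

Definition kite (x : 'I_n * {set 'I_n} * 'I_n) : {set 'I_n} := x.1.1 |: x.1.2 :|: [set x.2].

Definition kite_domain : {set 'I_3 * ('I_n * {set 'I_n} * 'I_n)} :=
  [set x : 'I_3 * ('I_n * {set 'I_n} * 'I_n) | x.2 \in kite_choice x.1].

Definition kites : {set {set 'I_n}} := [set kite x.2 | x in kite_domain].

Lemma n_eq3k : n = 3 * k. Proof. by rewrite mulnC divnK. Qed.

Lemma k_gt0 : 0 < k. Proof. by rewrite divn_gt0 // dvdn_leq. Qed.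

Lemma part_lt3 (v : 'I_n) : part v < 3.
Proof. by rewrite /part ltn_divLR ?k_gt0 // -n_eq3k. Qed.

Lemma nextp_lt3 j : nextp j < 3. Proof. exact: ltn_pmod. Qed.

Lemma nextp_neq j : j < 3 -> nextp j != j. Proof. by case: j => [|[|[|]]]. Qed.

Lemma card_V1 j : j < 3 -> #|V1 j| = m.
Proof.
move=> j_lt3; have -> : V1 j = [set v : 'I_n | j * k + 0 <= v < j * k + m].
  by apply/setP=> v; rewrite !inE -divn_modn_range ?k_gt0.
rewrite card_ord_range ?subnDl ?subn0 // n_eq3k; nia.
Qed.

Lemma card_V2 j : j < 3 -> #|V2 j| = k - m.
Proof.
move=> j_lt3; have -> : V2 j = [set v : 'I_n | j * k + m <= v < j * k + k].
  apply/setP=> v; rewrite !inE -divn_modn_range ?k_gt0 //.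
  by rewrite /lvl1 -leqNgt ltn_pmod ?k_gt0 ?andbT.
rewrite card_ord_range ?subnDl // n_eq3k; nia.
Qed.

Lemma card_kite_choice j : j < 3 -> #|kite_choice j| = m * 'C(k - m, 2) * m.
Proof.
by move=> j_lt3; rewrite !cardsX cards_draws card_V2 // !card_V1 ?nextp_lt3.
Qed.

Section KiteChoice.
Variables (j : 'I_3) (a : 'I_n) (B : {set 'I_n}) (d : 'I_n).
Hypothesis choice : (a, B, d) \in kite_choice j.

Lemma mem_kite_choice :
  [/\ lvl1 m a /\ part a = j, {subset B <= V2 j}, #|B| = 2 & lvl1 m d /\ part d = nextp j].
Proof.
move: choice; rewrite !inE.
by case/andP=> /andP[/andP[-> /eqP->] /andP[/subsetP sB /eqP cB]] /andP[-> /eqP->].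
Qed.

Lemma kite_level2 : [set v in kite (a, B, d) | ~~ lvl1 m v] = B.
Proof.
have [[la _] sB _ [ld _]] := mem_kite_choice.
apply/setP => v; rewrite !inE /=.
case vB: (v \in B); first by have := sB v vB; rewrite inE => /andP[-> _]; rewrite orbT.
case: (eqVneq v a) => [->|_]; first by rewrite la andbF.
by case: (eqVneq v d) => [->|_] /=; rewrite ?ld ?andbF.
Qed.

Lemma kite_V1 : kite (a, B, d) :&: V1 j = [set a].
Proof.
have [[la pa] sB _ [ld pd]] := mem_kite_choice.
apply/setP => v; rewrite !inE /=.
case: (eqVneq v a) => [->|_]; first by rewrite la pa eqxx.
case vB: (v \in B); first by have := sB v vB; rewrite inE => /andP[/negbTE ->].
by case: (eqVneq v d) => [->|_]; rewrite ?pd ?(negbTE (nextp_neq (ltn_ord j))) ?andbF.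
Qed.

Lemma kite_V1_next : kite (a, B, d) :&: V1 (nextp j) = [set d].
Proof.
have [[la pa] sB _ [ld pd]] := mem_kite_choice.
apply/setP => v; rewrite !inE /=.
case: (eqVneq v d) => [->|_]; first by rewrite ld pd eqxx orbT.
case vB: (v \in B).
  by have := sB v vB; rewrite inE => /andP[/negbTE ->]; rewrite andbF.
case: (eqVneq v a) => [->|_] //.
by rewrite pa eq_sym (negbTE (nextp_neq (ltn_ord j))) andbF.
Qed.

Lemma kite_enum : exists b c,
  [/\ uniq [:: a; b; c; d], kite (a, B, d) =i [:: a; b; c; d]
     & kite_type (vtype m a) (vtype m b) (vtype m c) (vtype m d)].
Proof.
have [[la pa] sB /eqP/cards2P[b [c [bc EB]]] [ld pd]] := mem_kite_choice.
have /sB/[!inE]/andP[lb /eqP pb] : b \in B by rewrite EB !inE eqxx.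
have /sB/[!inE]/andP[lc /eqP pc] : c \in B by rewrite EB !inE eqxx orbT.
have lvl1_neq (u w : 'I_n) : lvl1 m u -> ~~ lvl1 m w -> u != w.
  by move=> lu lw; apply: contraNneq lw => <-.
have ad : a != d by apply: contra_neq (nextp_neq (ltn_ord j)) => ad; rewrite -pd -ad pa.
exists b, c; split.
- have [ab ac] := (lvl1_neq _ _ la lb, lvl1_neq _ _ la lc).
  have [db dc] := (lvl1_neq _ _ ld lb, lvl1_neq _ _ ld lc).
  by rewrite /= !inE !negb_or ab ac ad bc (eq_sym b) db (eq_sym c) dc.
- by move=> v; rewrite EB !inE -!orbA.
- by rewrite /kite_type /= la lb lc ld pa pb pc pd !eqxx.
Qed.

End KiteChoice.

Lemma kites_of_kite_type (S : {set 'I_n}) a b c d :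
  uniq [:: a; b; c; d] -> S =i [:: a; b; c; d] ->
  kite_type (vtype m a) (vtype m b) (vtype m c) (vtype m d) -> S \in kites.
Proof.
rewrite /= !inE !negb_or => /and4P[_ /andP[bc _] _ _] S_eq.
rewrite /kite_type /vtype /= => /and5P[la lb lc ld /and3P[/eqP pb /eqP pc /eqP pd]].
apply/imsetP; exists (Ordinal (part_lt3 a), (a, [set b; c], d)).
  rewrite !inE /= la ld pd cards2 bc !eqxx !andbT.
  by apply/subsetP => v; rewrite !inE => /orP[]/eqP->; rewrite ?lb ?lc ?pb ?pc eqxx.
by apply/setP => v; rewrite S_eq !inE -!orbA.
Qed.

Lemma kite_inj : {in kite_domain &, injective (fun x => kite x.2)}.
Proof.
move=> [j [[a B] d]] [j' [[a' B'] d']] choice choice' /= E.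
have {}choice : (a, B, d) \in kite_choice j by move: choice; rewrite !inE.
have {}choice' : (a', B', d') \in kite_choice j' by move: choice'; rewrite !inE.
have EB : B = B' by rewrite -(kite_level2 choice) E (kite_level2 choice').
subst B'; have [_ sB cB _] := mem_kite_choice choice.
have [_ sB' _ _] := mem_kite_choice choice'.
have [b bB] : exists b, b \in B by apply/set0Pn; rewrite -card_gt0 cB.
have Ej : j = j'.
  apply: ord_inj; move: (sB b bB) (sB' b bB).
  by rewrite !inE => /andP[_ /eqP <-] /andP[_ /eqP].
subst j'; congr (_, (_, _, _)); apply: set1_inj.
  by rewrite -(kite_V1 choice) E (kite_V1 choice').
by rewrite -(kite_V1_next choice) E (kite_V1_next choice').
Qed.

Lemma card_kites : #|kites| = 3 * (m * 'C(k - m, 2) * m).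
Proof.
rewrite card_in_imset; last exact: kite_inj.
rewrite (cards_depX (fun j : 'I_3 => kite_choice j)).
rewrite (eq_bigr (fun _ => m * 'C(k - m, 2) * m)) => [|j _]; last exact: card_kite_choice.
by rewrite sum_nat_const card_ord.
Qed.

Lemma phi_set_kites :
  [set S : {set 'I_n} | (#|S| == 4) && (induced_edges m S == 3)] = kites.
Proof.
apply/setP=> S; rewrite inE; apply/andP/idP => [[/eqP card_S /eqP edges_S]|].
- have [a [b [c [d [uniq_abcd S_eq]]]]] := set4_enum card_S.
  move: edges_S; rewrite (induced_edges_set4 _ uniq_abcd S_eq) => /eqP.
  rewrite type_edges4_eq3 ?part_lt3 //.
  have kites_perm x y z w : perm_eq [:: x; y; z; w] [:: a; b; c; d] ->
      kite_type (vtype m x) (vtype m y) (vtype m z) (vtype m w) -> S \in kites.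
    move=> pxyzw; apply: kites_of_kite_type; first by rewrite (perm_uniq pxyzw).
    by move=> v; rewrite S_eq (perm_mem pxyzw).
  by case/or4P=> [K|K|K|/or4P[K|K|K|/or4P[K|K|K|/or3P[K|K|K]]]];
    apply: (kites_perm _ _ _ _ _ K); apply/permP => p /=; lia.
- case/imsetP=> -[j [[a B] d]] choice ->.
  have {}choice : (a, B, d) \in kite_choice j by move: choice; rewrite !inE.
  have [b [c [uniq_abcd kite_eq K]]] := kite_enum choice.
  have /card_uniqP card_abcd := uniq_abcd.
  rewrite /= (eq_card kite_eq) card_abcd (induced_edges_set4 _ uniq_abcd kite_eq).
  by rewrite type_edges4_eq3 ?part_lt3 // /kite_type_perm K.
Qed.

Lemma phi_eq : phi n m = 3 * (m * 'C(k - m, 2) * m).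
Proof. by rewrite /phi phi_set_kites card_kites. Qed.

End Kites.

Import GRing.Theory Num.Theory.
Local Open Scope ring_scope.

Lemma bin2_natr (R : numFieldType) x : 'C(x, 2)%:R = x%:R * (x%:R - 1) / 2 :> R.
Proof.
have bin2_mul2 : ('C(x, 2) * 2 = x * x.-1)%N.
  by rewrite mulnC mul_bin_left bin1 subn1 mulnC.
case: x bin2_mul2 => [|x] bin2_mul2; first by rewrite bin0n !mulr0n !mul0r.
apply: (mulIf (_ : 2 != 0 :> R)); first by rewrite pnatr_eq0.
by rewrite divfK ?pnatr_eq0 // -natrM bin2_mul2 natrM -natr1 addrK.
Qed.

Theorem lemma2p1 (n m : nat) :
  (0 < n)%N -> (3 %| n)%N -> (m <= n %/ 3)%N ->
  (phi n m)%:R = (1 / 6 : rat) * (m%:R ^+ 2) * (n%:R - 3 * m%:R)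
                   * (n%:R - 3 * m%:R - 3).
Proof.
move=> n_gt0 dvd3n m_le; rewrite phi_eq //.
have [x k_eq] : exists x, (n %/ 3 = m + x)%N by exists (n %/ 3 - m)%N; rewrite subnKC.
have n_eq : n = (3 * (m + x))%N by rewrite -k_eq; exact: n_eq3k.
rewrite k_eq addKn n_eq !natrM natrD bin2_natr.
by field.
Qed.
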